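(* Let $N$ and $N_1$ be compactly supported distribution functions taking finitely many values. Put ${\scriptstyle\Delta}N=N_1-N$ and $N_\theta=N+\theta\,{\scriptstyle\Delta}N$, and define $$\mathbf{u}_\theta=\int_0^\infty N_\theta(t)\,dt,\qquad {\scriptstyle\Delta}\mathbf{u}=\int_0^\infty{\scriptstyle\Delta}N(t)\,dt,\qquad \mathbf{u}_{\scriptstyle\Delta}=\int_0^\infty|{\scriptstyle\Delta}N(t)|\,dt .$$ Then for $\theta\in(0,1)$, $$-\frac{d^2\,\mathbf{u}^*(N_\theta)}{d\theta^2}\ge\frac{(\mathbf{u}_{\scriptstyle\Delta})^2}{\mathbf{u}_\theta}\ge\frac{|{\scriptstyle\Delta}\mathbf{u}|^2}{\mathbf{u}_\theta}.$$
   Context: A distribution function is a nonincreasing function $N:[0,\infty)\to[0,1]$; such functions arise as normalized distribution functions $t\mapsto|I|^{-1}|\{x\in I:u(x)>t\}|$. For a distribution function $N$, $$\mathbf{u}^*(N)=\int_0^\infty\psi_0(N(t))\,dt,\qquad \psi_0(s)=s\ln(e/s).$$ *)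

From Stdlib Require Import Reals Lra List.
From Coquelicot Require Import Coquelicot.
Open Scope R_scope.

(* A distribution function N : [0,oo) -> [0,1], nonincreasing.
   Represented as a function R -> R; only its values on [0,oo) matter. *)
Definition distr_fn (N : R -> R) : Prop :=
  (forall s t, 0 <= s -> s <= t -> N t <= N s) /\
  (forall t, 0 <= t -> 0 <= N t <= 1).

Definition compact_supp (N : R -> R) : Prop :=
  exists T, forall t, T <= t -> N t = 0.

Definition finitely_valued (N : R -> R) : Prop :=
  exists l : list R, forall t, 0 <= t -> In (N t) l.

(* psi0(s) = s ln(e/s), extended by continuity with psi0(0) = 0 *)
Definition psi0 (s : R) : R :=
  if Rle_dec s 0 then 0 else s * ln (exp 1 / s).

Definition int0oo (f : R -> R) : R :=
  RInt_gen f (at_point 0) (Rbar_locally p_infty).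

Definition ustar (N : R -> R) : R := int0oo (fun t => psi0 (N t)).

Definition DeltaN (N N1 : R -> R) (t : R) : R := N1 t - N t.
Definition Ntheta (N N1 : R -> R) (theta : R) (t : R) : R :=
  N t + theta * DeltaN N N1 t.
Definition u_theta (N N1 : R -> R) (theta : R) : R := int0oo (Ntheta N N1 theta).
Definition Delta_u (N N1 : R -> R) : R := int0oo (DeltaN N N1).
Definition u_Delta (N N1 : R -> R) : R := int0oo (fun t => Rabs (DeltaN N N1 t)).

From Stdlib Require Import Reals Lra List ClassicalEpsilon Classical.
From Coquelicot Require Import Coquelicot.
Open Scope R_scope.

(* As N and N1 take finitely many values, [0, oo) splits into finitely many level sets
   {N = a, N1 = b}; each is an inclusion-exclusion combination of superlevel sets of the
   nonincreasing functions N, N1, which are intervals starting at 0.  Every integral in the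
   statement is therefore a finite sum  sum G(a, b) m(a, b)  with nonnegative weights
   m(a, b) (the lengths of the level sets), and u*(N_theta) = sum psi0(a + theta (b - a)) m(a, b).
   Since psi0''(s) = -1/s, we get  -d^2 u*(N_theta) / d theta^2 = sum (b - a)^2 / c m  with
   c = a + theta (b - a) > 0, and the Cauchy-Schwarz inequality with weights c m bounds this
   below by  (sum |b - a| m)^2 / sum c m = u_Delta^2 / u_theta.  Finally |Delta u| <= u_Delta. *)

Lemma is_RInt_zero (a b : R) : is_RInt (fun _ => 0) a b 0.
Proof.
  pose proof (is_RInt_const (V := R_NormedModule) a b 0) as Hconst.
  change (is_RInt (fun _ => 0) a b ((b - a) * 0)) in Hconst.
  now rewrite Rmult_0_r in Hconst.
Qed.

Lemma is_RInt_gen_eventually_zero (g : R -> R) (T : R) :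
  (forall t, T <= t -> g t = 0) ->
  is_RInt_gen g (at_point T) (Rbar_locally p_infty) 0.
Proof.
  intros Hzero P HP.
  apply Filter_prod with (fun x => x = T) (fun y => T < y); [reflexivity | exists T; now intros y Hy |].
  intros x y -> Hy. exists 0. split; [| now apply locally_singleton].
  apply is_RInt_ext with (fun _ => 0); [| apply is_RInt_zero].
  intros u Hu; simpl in Hu. rewrite Rmin_left, Rmax_right in Hu by lra.
  symmetry; apply Hzero; lra.
Qed.

Lemma int0oo_eq_RInt (g : R -> R) (T : R) :
  ex_RInt g 0 T -> (forall t, T <= t -> g t = 0) -> int0oo g = RInt g 0 T.
Proof.
  intros Hint Hzero.
  assert (Hhead : is_RInt_gen g (at_point 0) (at_point T) (RInt g 0 T))
    by apply is_RInt_gen_at_point, (RInt_correct (V := R_CompleteNormedModule)), Hint.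
  pose proof (is_RInt_gen_Chasles (V := R_NormedModule) (Fa := at_point 0)
    (Fc := Rbar_locally p_infty) g T _ _ Hhead (is_RInt_gen_eventually_zero g T Hzero)) as H.
  change (is_RInt_gen g (at_point 0) (Rbar_locally p_infty) (RInt g 0 T + 0)) in H.
  rewrite Rplus_0_r in H. now apply is_RInt_gen_unique.
Qed.

Definition indicator (Q : R -> Prop) (t : R) : R :=
  if excluded_middle_informative (Q t) then 1 else 0.

Definition down_closed (Q : R -> Prop) : Prop :=
  forall s t, 0 <= s -> s <= t -> Q t -> Q s.

Lemma down_closed_threshold (Q : R -> Prop) (T : R) :
  0 <= T -> down_closed Q ->
  exists s, 0 <= s <= T /\ (forall t, 0 <= t < s -> Q t) /\ (forall t, s < t <= T -> ~ Q t).
Proof.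
  intros HT HQ.
  set (E := fun t => t = 0 \/ (0 <= t <= T /\ Q t)).
  assert (Hbound : bound E) by (exists T; intros x [-> | [Hx _]]; lra).
  destruct (completeness E Hbound (ex_intro _ 0 (or_introl eq_refl))) as [s [Hub Hlub]].
  assert (Hs0 : 0 <= s) by (apply Hub; now left).
  assert (HsT : s <= T) by (apply Hlub; intros x [-> | [Hx _]]; lra).
  exists s. repeat split; try lra.
  - intros t Ht. apply NNPP. intros HnQ.
    enough (s <= t) by lra.
    apply Hlub. intros e [-> | [He HQe]]; [lra |].
    destruct (Rle_dec e t) as [Het | Het]; [exact Het |].
    exfalso. apply HnQ, (HQ t e); [lra | lra | exact HQe].
  - intros t Ht HQt. enough (t <= s) by lra.
    apply Hub. right. split; [lra | exact HQt].
Qed.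

Lemma ex_RInt_indicator_down_closed (Q : R -> Prop) (T : R) :
  0 <= T -> down_closed Q -> ex_RInt (indicator Q) 0 T.
Proof.
  intros HT HQ.
  destruct (down_closed_threshold Q T HT HQ) as (s & Hs & Hin & Hout).
  apply (ex_RInt_Chasles (V := R_NormedModule) _ 0 s T).
  - exists ((s - 0) * 1). apply is_RInt_ext with (fun _ => 1);
      [| apply (is_RInt_const (V := R_NormedModule))].
    intros t Ht. rewrite Rmin_left, Rmax_right in Ht by lra.
    unfold indicator. destruct excluded_middle_informative as [_ | HnQ]; [reflexivity |].
    exfalso. apply HnQ, Hin. lra.
  - exists ((T - s) * 0). apply is_RInt_ext with (fun _ => 0);
      [| apply (is_RInt_const (V := R_NormedModule))].
    intros t Ht. rewrite Rmin_left, Rmax_right in Ht by lra.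
    unfold indicator. destruct excluded_middle_informative as [HQt | _]; [| reflexivity].
    exfalso. apply (Hout t); [lra | exact HQt].
Qed.

Section Lsum.

Context {A : Type}.

Definition lsum (P : list A) (g : A -> R) : R := fold_right (fun p acc => g p + acc) 0 P.

Lemma lsum_ext P g h : (forall p, In p P -> g p = h p) -> lsum P g = lsum P h.
Proof.
  induction P as [| x P IH]; simpl; intros H; [reflexivity |].
  rewrite H, IH; auto.
Qed.

Lemma lsum_plus P g h : lsum P (fun p => g p + h p) = lsum P g + lsum P h.
Proof. induction P as [| x P IH]; simpl; [ring | rewrite IH; ring]. Qed.

Lemma lsum_scal P k g : lsum P (fun p => k * g p) = k * lsum P g.
Proof. induction P as [| x P IH]; simpl; [ring | rewrite IH; ring]. Qed.

Lemma lsum_opp P g : lsum P (fun p => - g p) = - lsum P g.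
Proof. induction P as [| x P IH]; simpl; [ring | rewrite IH; ring]. Qed.

Lemma lsum_ge0 P g : (forall p, In p P -> 0 <= g p) -> 0 <= lsum P g.
Proof.
  induction P as [| x P IH]; simpl; intros H; [lra |].
  pose proof (H x (or_introl eq_refl)). pose proof (IH (fun p Hp => H p (or_intror Hp))). lra.
Qed.

Lemma lsum_abs P g : Rabs (lsum P g) <= lsum P (fun p => Rabs (g p)).
Proof.
  induction P as [| x P IH]; simpl.
  - rewrite Rabs_R0; lra.
  - eapply Rle_trans; [apply Rabs_triang | lra].
Qed.

Lemma lsum_zero P g : (forall p, In p P -> g p = 0) -> lsum P g = 0.
Proof.
  induction P as [| x P IH]; simpl; intros H; [reflexivity |].
  rewrite H, IH; auto; ring.
Qed.

Lemma lsum_single P g x : NoDup P -> In x P ->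
  (forall p, In p P -> p <> x -> g p = 0) -> lsum P g = g x.
Proof.
  induction P as [| y P IH]; simpl; intros HP Hx H; [contradiction |].
  inversion HP as [| ? ? Hy HP']; subst.
  destruct Hx as [<- | Hx].
  - rewrite lsum_zero; [ring |]. intros p Hp. apply H; [now right |]. intros ->. contradiction.
  - rewrite H, IH; auto; [ring |]. intros ->. contradiction.
Qed.

Lemma is_RInt_lsum P (f : A -> R -> R) (I : A -> R) a b :
  (forall p, In p P -> is_RInt (f p) a b (I p)) ->
  is_RInt (fun t => lsum P (fun p => f p t)) a b (lsum P I).
Proof.
  induction P as [| x P IH]; simpl; intros H; [apply is_RInt_zero |].
  apply (is_RInt_plus (V := R_NormedModule)); [apply H | apply IH]; auto.
Qed.

Lemma is_derive_lsum P (f : A -> R -> R) (df : A -> R) x :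
  (forall p, In p P -> is_derive (f p) x (df p)) ->
  is_derive (fun y => lsum P (fun p => f p y)) x (lsum P df).
Proof.
  induction P as [| q P IH]; simpl; intros H.
  - apply (is_derive_const (K := R_AbsRing) (V := R_NormedModule)).
  - apply (is_derive_plus (K := R_AbsRing) (V := R_NormedModule)); [apply H | apply IH]; auto.
Qed.

End Lsum.

Lemma nodup_filter_exists {A : Type} (l : list A) (Q : A -> Prop) :
  exists P, NoDup P /\ forall p, In p P <-> In p l /\ Q p.
Proof.
  set (eq_dec := fun x y : A => excluded_middle_informative (x = y)).
  set (q := fun x => if excluded_middle_informative (Q x) then true else false).
  exists (nodup eq_dec (filter q l)). split; [apply NoDup_nodup |].
  intros p. rewrite nodup_In, filter_In. unfold q.
  destruct excluded_middle_informative; intuition discriminate.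
Qed.

Section LevelSets.

Variables N N1 : R -> R.

Definition level_ind (a b : R) : R -> R := indicator (fun t => N t = a /\ N1 t = b).

Definition level_mass (T : R) (p : R * R) : R := RInt (level_ind (fst p) (snd p)) 0 T.

Lemma level_ind_incl_excl a b t :
  level_ind a b t =
    indicator (fun t => a <= N t /\ b <= N1 t) t - indicator (fun t => a < N t /\ b <= N1 t) t
    - indicator (fun t => a <= N t /\ b < N1 t) t + indicator (fun t => a < N t /\ b < N1 t) t.
Proof.
  unfold level_ind, indicator.
  destruct (Rtotal_order (N t) a) as [Ha | [Ha | Ha]];
  destruct (Rtotal_order (N1 t) b) as [Hb | [Hb | Hb]];
  repeat destruct excluded_middle_informative; intuition lra.
Qed.

Lemma level_ind_on t : level_ind (N t) (N1 t) t = 1.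
Proof. unfold level_ind, indicator. destruct excluded_middle_informative; tauto. Qed.

Lemma level_ind_off a b t : (a, b) <> (N t, N1 t) -> level_ind a b t = 0.
Proof.
  intros Hne. unfold level_ind, indicator.
  destruct excluded_middle_informative as [[Ha Hb] | _]; [| reflexivity].
  subst. contradiction.
Qed.

Hypotheses (HN : distr_fn N) (HN1 : distr_fn N1).

Lemma ex_RInt_level_ind a b T : 0 <= T -> ex_RInt (level_ind a b) 0 T.
Proof.
  intros HT.
  assert (Hdc : forall (cmp1 cmp2 : R -> R -> Prop),
      (forall x y z, cmp1 x y -> y <= z -> cmp1 x z) ->
      (forall x y z, cmp2 x y -> y <= z -> cmp2 x z) ->
      ex_RInt (indicator (fun t => cmp1 a (N t) /\ cmp2 b (N1 t))) 0 T).
  { intros cmp1 cmp2 H1 H2. apply ex_RInt_indicator_down_closed; [exact HT |].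
    intros s t Hs Hst [Ha Hb]. split.
    - apply H1 with (N t); [exact Ha | now apply HN].
    - apply H2 with (N1 t); [exact Hb | now apply HN1]. }
  assert (Hle : forall x y z : R, x <= y -> y <= z -> x <= z) by (intros; lra).
  assert (Hlt : forall x y z : R, x < y -> y <= z -> x < z) by (intros; lra).
  eapply ex_RInt_ext; [intros t _; symmetry; apply level_ind_incl_excl |].
  apply (ex_RInt_plus (V := R_NormedModule)); [| exact (Hdc _ _ Hlt Hlt)].
  apply (ex_RInt_minus (V := R_NormedModule)); [| exact (Hdc _ _ Hle Hlt)].
  apply (ex_RInt_minus (V := R_NormedModule)); [exact (Hdc _ _ Hle Hle) | exact (Hdc _ _ Hlt Hle)].
Qed.

Lemma level_mass_ge0 T p : 0 <= T -> 0 <= level_mass T p.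
Proof.
  intros HT. apply RInt_ge_0; [exact HT | now apply ex_RInt_level_ind |].
  intros t _. unfold level_ind, indicator. destruct excluded_middle_informative; lra.
Qed.

Lemma lsum_level_ind (P : list (R * R)) (G : R -> R -> R) t :
  NoDup P -> (N t = 0 /\ N1 t = 0) \/ In (N t, N1 t) P -> G 0 0 = 0 ->
  lsum P (fun p => G (fst p) (snd p) * level_ind (fst p) (snd p) t) = G (N t) (N1 t).
Proof.
  intros HP Hcov HG.
  destruct (classic (In (N t, N1 t) P)) as [Hin | Hout].
  - rewrite (lsum_single P _ (N t, N1 t) HP Hin); simpl.
    + rewrite level_ind_on. ring.
    + intros [a b] _ Hne. simpl. rewrite level_ind_off by exact Hne. ring.
  - destruct Hcov as [[H0 H1] | Hin]; [| contradiction].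
    rewrite H0, H1, HG. apply lsum_zero. intros [a b] Hp. simpl.
    rewrite level_ind_off; [ring |]. intros Heq. apply Hout. rewrite <- Heq. exact Hp.
Qed.

Lemma int0oo_level_decomposition (P : list (R * R)) (T : R) (G : R -> R -> R) :
  0 <= T -> NoDup P ->
  (forall t, 0 <= t -> (N t = 0 /\ N1 t = 0) \/ In (N t, N1 t) P) ->
  (forall t, T <= t -> N t = 0 /\ N1 t = 0) -> G 0 0 = 0 ->
  int0oo (fun t => G (N t) (N1 t)) = lsum P (fun p => G (fst p) (snd p) * level_mass T p).
Proof.
  intros HT HP Hcov Hsupp HG.
  assert (Hsum : is_RInt (fun t => G (N t) (N1 t)) 0 T
                   (lsum P (fun p => G (fst p) (snd p) * level_mass T p))).
  { eapply is_RInt_ext.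
    - intros t Ht. rewrite Rmin_left, Rmax_right in Ht by lra.
      apply lsum_level_ind; [exact HP | apply Hcov; lra | exact HG].
    - apply is_RInt_lsum. intros p _.
      apply (is_RInt_scal (V := R_NormedModule)), (RInt_correct (V := R_CompleteNormedModule)).
      now apply ex_RInt_level_ind. }
  rewrite (int0oo_eq_RInt _ T).
  - now apply is_RInt_unique.
  - now exists (lsum P (fun p => G (fst p) (snd p) * level_mass T p)).
  - intros t Ht. destruct (Hsupp t Ht) as [-> ->]. exact HG.
Qed.

Lemma finite_level_decomposition :
  compact_supp N -> compact_supp N1 -> finitely_valued N -> finitely_valued N1 ->
  exists (P : list (R * R)) (m : R * R -> R),
    (forall p, In p P -> 0 <= fst p /\ 0 <= snd p /\ 0 < fst p + snd p) /\
    (forall p, 0 <= m p) /\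
    forall G : R -> R -> R, G 0 0 = 0 ->
      int0oo (fun t => G (N t) (N1 t)) = lsum P (fun p => G (fst p) (snd p) * m p).
Proof.
  intros [T0 HT0] [T1 HT1] [L HL] [L1 HL1].
  set (T := Rmax 0 (Rmax T0 T1)).
  assert (HT : 0 <= T) by apply Rmax_l.
  assert (Hsupp : forall t, T <= t -> N t = 0 /\ N1 t = 0).
  { intros t Ht. pose proof (Rmax_r 0 (Rmax T0 T1)).
    pose proof (Rmax_l T0 T1). pose proof (Rmax_r T0 T1).
    split; [apply HT0 | apply HT1]; unfold T in Ht; lra. }
  destruct (nodup_filter_exists (list_prod L L1)
              (fun p => 0 <= fst p /\ 0 <= snd p /\ 0 < fst p + snd p)) as [P [HP HPin]].
  exists P, (level_mass T). split; [| split].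
  - intros p Hp. apply HPin, Hp.
  - intros p. now apply level_mass_ge0.
  - intros G HG. apply int0oo_level_decomposition; [exact HT | exact HP | | exact Hsupp | exact HG].
    intros t Ht. destruct (proj2 HN t Ht), (proj2 HN1 t Ht).
    destruct (Rle_lt_dec (N t + N1 t) 0) as [Hzero | Hpos]; [left; split; lra | right].
    apply HPin. split; [apply in_prod; auto | simpl; lra].
Qed.

End LevelSets.

(* [Ntheta N N1 th t] is convertible to [interp th (N t) (N1 t)]. *)
Definition interp (th a b : R) : R := a + th * (b - a).

Lemma interp_pos th a b : 0 < th < 1 -> 0 <= a -> 0 <= b -> 0 < a + b -> 0 < interp th a b.
Proof.
  intros Hth Ha Hb Hab. unfold interp.
  replace (a + th * (b - a)) with ((1 - th) * a + th * b) by ring.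
  destruct (Rle_lt_or_eq_dec 0 a Ha) as [Ha' | <-]; nra.
Qed.

Lemma psi0_interp_0 th : psi0 (interp th 0 0) = 0.
Proof.
  unfold psi0, interp. replace (0 + th * (0 - 0)) with 0 by ring.
  destruct Rle_dec; lra.
Qed.

Lemma is_derive_psi0 s : 0 < s -> is_derive psi0 s (- ln s).
Proof.
  intros Hs.
  apply is_derive_ext_loc with (fun u => u * (1 - ln u)).
  - apply (filter_imp (fun u => 0 < u)); [| exact (open_gt 0 s Hs)].
    intros u Hu. unfold psi0. destruct Rle_dec; [lra |].
    rewrite ln_div by (exact (exp_pos 1) || exact Hu). now rewrite ln_exp.
  - auto_derive; [exact Hs | field; lra].
Qed.

Lemma is_derive_psi0_interp th a b : 0 < interp th a b ->
  is_derive (fun th => psi0 (interp th a b)) th (- ln (interp th a b) * (b - a)).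
Proof.
  intros Hpos.
  replace (- ln (interp th a b) * (b - a)) with ((b - a) * - ln (interp th a b)) by ring.
  apply (is_derive_comp psi0 (fun th => interp th a b)).
  - now apply is_derive_psi0.
  - unfold interp. auto_derive; [exact I | ring].
Qed.

Lemma is_derive_ln_interp th a b : 0 < interp th a b ->
  is_derive (fun th => - ln (interp th a b) * (b - a)) th (- ((b - a) ^ 2 / interp th a b)).
Proof. unfold interp. intros Hpos. auto_derive; [exact Hpos | field; lra]. Qed.

Definition psi0_sum (P : list (R * R)) (m : R * R -> R) (th : R) : R :=
  lsum P (fun p => psi0 (interp th (fst p) (snd p)) * m p).

Lemma psi0_sum_derive2 (P : list (R * R)) (m : R * R -> R) (th : R) :
  (forall p, In p P -> 0 <= fst p /\ 0 <= snd p /\ 0 < fst p + snd p) -> 0 < th < 1 ->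
  ex_derive (psi0_sum P m) th /\ ex_derive_n (psi0_sum P m) 2 th /\
  Derive_n (psi0_sum P m) 2 th
    = - lsum P (fun p => (snd p - fst p) ^ 2 / interp th (fst p) (snd p) * m p).
Proof.
  intros HP Hth.
  assert (Hpos : forall y, 0 < y < 1 -> forall p, In p P -> 0 < interp y (fst p) (snd p)).
  { intros y Hy p Hp. destruct (HP p Hp) as (Ha & Hb & Hab). now apply interp_pos. }
  set (dS := fun y => lsum P (fun p => - ln (interp y (fst p) (snd p)) * (snd p - fst p) * m p)).
  assert (HdS : forall y, 0 < y < 1 -> is_derive (psi0_sum P m) y (dS y)).
  { intros y Hy. apply is_derive_lsum. intros p Hp.
    refine (is_derive_scal_l (V := R_NormedModule) _ y _ (m p) _).
    apply is_derive_psi0_interp, Hpos; assumption. }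
  assert (Hd2 : is_derive (Derive_n (psi0_sum P m) 1) th
                  (lsum P (fun p => - ((snd p - fst p) ^ 2 / interp th (fst p) (snd p)) * m p))).
  { apply is_derive_ext_loc with dS.
    - apply (filter_imp (fun y => 0 < y < 1)).
      + intros y Hy. symmetry. now apply is_derive_unique, HdS.
      + apply filter_and; [exact (open_gt 0 th (proj1 Hth)) | exact (open_lt 1 th (proj2 Hth))].
    - apply is_derive_lsum. intros p Hp.
      refine (is_derive_scal_l (V := R_NormedModule) _ th _ (m p) _).
      apply is_derive_ln_interp, Hpos; assumption. }
  split; [| split].
  - exists (dS th). now apply HdS.
  - now exists (lsum P (fun p => - ((snd p - fst p) ^ 2 / interp th (fst p) (snd p)) * m p)).
  - rewrite <- lsum_opp. erewrite lsum_ext; [apply is_derive_unique, Hd2 |].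
    intros p _. simpl. ring.
Qed.

Lemma sqr_le_mul_of_quadratic_nonneg (a b c : R) : 0 <= c ->
  (forall l, 0 <= a - 2 * l * b + l ^ 2 * c) -> b ^ 2 <= a * c.
Proof.
  intros Hc Hq. destruct (Rle_lt_or_eq_dec 0 c Hc) as [Hc' | <-].
  - assert (Hprod : 0 <= (a - 2 * (b / c) * b + (b / c) ^ 2 * c) * c)
      by (apply Rmult_le_pos; [apply Hq | lra]).
    replace ((a - 2 * (b / c) * b + (b / c) ^ 2 * c) * c) with (a * c - b ^ 2) in Hprod
      by (field; lra).
    lra.
  - destruct (Req_dec b 0) as [-> | Hb]; [lra |].
    specialize (Hq ((a + 1) / (2 * b))).
    replace (a - 2 * ((a + 1) / (2 * b)) * b + ((a + 1) / (2 * b)) ^ 2 * 0) with (-1) in Hq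
      by (field; exact Hb).
    lra.
Qed.

Lemma Rdiv_le_compat_nonneg (a b c : R) : 0 <= c -> a <= b -> a / c <= b / c.
Proof.
  intros Hc Hab. destruct (Rle_lt_or_eq_dec 0 c Hc) as [Hc' | <-].
  - apply Rmult_le_compat_r; [left; now apply Rinv_0_lt_compat | exact Hab].
  - unfold Rdiv. rewrite Rinv_0. lra.
Qed.

(* Also holds when the weights sum to 0, since [x / 0 = 0]. *)
Lemma lsum_cauchy_schwarz {A : Type} (P : list A) (x c m : A -> R) :
  (forall p, In p P -> 0 < c p /\ 0 <= m p) ->
  lsum P (fun p => Rabs (x p) * m p) ^ 2 / lsum P (fun p => c p * m p)
    <= lsum P (fun p => x p ^ 2 / c p * m p).
Proof.
  intros Hw.
  assert (Hterm : forall y p, In p P -> 0 <= y ^ 2 / c p * m p).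
  { intros y p Hp. destruct (Hw p Hp).
    apply Rmult_le_pos; [apply Rdiv_le_0_compat; [apply pow2_ge_0 | lra] | lra]. }
  assert (HU : 0 <= lsum P (fun p => c p * m p)).
  { apply lsum_ge0. intros p Hp. destruct (Hw p Hp). apply Rmult_le_pos; lra. }
  destruct (Rle_lt_or_eq_dec 0 _ HU) as [HUpos | HU0].
  - apply Rle_div_l; [exact HUpos |]. apply sqr_le_mul_of_quadratic_nonneg; [exact HU |].
    intros l.
    assert (H : 0 <= lsum P (fun p => (Rabs (x p) - l * c p) ^ 2 / c p * m p))
      by (apply lsum_ge0; intros p Hp; apply Hterm, Hp).
    rewrite (lsum_ext P _ (fun p => (x p ^ 2 / c p * m p + (-2 * l) * (Rabs (x p) * m p))
                                     + l ^ 2 * (c p * m p))) in H.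
    2: { intros p Hp. destruct (Hw p Hp). rewrite <- (pow2_abs (x p)). field. lra. }
    rewrite !lsum_plus, !lsum_scal in H. lra.
  - rewrite <- HU0. unfold Rdiv. rewrite Rinv_0, Rmult_0_r.
    apply lsum_ge0. intros p Hp. apply Hterm, Hp.
Qed.

Theorem lemma5p1 (N N1 : R -> R) :
  distr_fn N -> distr_fn N1 ->
  compact_supp N -> compact_supp N1 ->
  finitely_valued N -> finitely_valued N1 ->
  forall theta, 0 < theta < 1 ->
    ex_derive (fun th => ustar (Ntheta N N1 th)) theta /\
    ex_derive_n (fun th => ustar (Ntheta N N1 th)) 2 theta /\
    - Derive_n (fun th => ustar (Ntheta N N1 th)) 2 theta
      >= (u_Delta N N1) ^ 2 / u_theta N N1 theta /\
    (u_Delta N N1) ^ 2 / u_theta N N1 theta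
      >= (Rabs (Delta_u N N1)) ^ 2 / u_theta N N1 theta.
Proof.
  intros HD HD1 HsN HsN1 HfN HfN1 theta Hth.
  destruct (finite_level_decomposition N N1 HD HD1 HsN HsN1 HfN HfN1) as (P & m & HP & Hm & Hint).
  assert (Hustar : forall th, ustar (Ntheta N N1 th) = psi0_sum P m th)
    by (intros th; exact (Hint (fun a b => psi0 (interp th a b)) (psi0_interp_0 th))).
  assert (EU : u_theta N N1 theta = lsum P (fun p => interp theta (fst p) (snd p) * m p))
    by (apply (Hint (interp theta)); unfold interp; ring).
  assert (EA : u_Delta N N1 = lsum P (fun p => Rabs (snd p - fst p) * m p))
    by (apply (Hint (fun a b => Rabs (b - a))); rewrite Rminus_0_r; apply Rabs_R0).
  assert (EB : Delta_u N N1 = lsum P (fun p => (snd p - fst p) * m p))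
    by (apply (Hint (fun a b => b - a)); ring).
  destruct (psi0_sum_derive2 P m theta HP Hth) as (Hd1 & Hd2 & HD2).
  split; [| split; [| split]].
  - exact (ex_derive_ext _ _ theta (fun th => eq_sym (Hustar th)) Hd1).
  - exact (ex_derive_n_ext _ _ 2 theta (fun th => eq_sym (Hustar th)) Hd2).
  - rewrite (Derive_n_ext _ _ 2 theta Hustar), HD2, Ropp_involutive, EU, EA.
    apply Rle_ge, lsum_cauchy_schwarz. intros p Hp. destruct (HP p Hp) as (Ha & Hb & Hab).
    split; [now apply interp_pos | apply Hm].
  - rewrite EU, EA, EB. apply Rle_ge, Rdiv_le_compat_nonneg.
    + apply lsum_ge0. intros p Hp. destruct (HP p Hp) as (Ha & Hb & Hab).
      apply Rmult_le_pos; [left; now apply interp_pos | apply Hm].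
    + apply pow_incr. split; [apply Rabs_pos |].
      eapply Rle_trans; [apply lsum_abs |]. right. apply lsum_ext. intros p _.
      rewrite Rabs_mult, (Rabs_pos_eq (m p)) by apply Hm. reflexivity.
Qed.
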